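(* Let $k$ be a fixed complex number. For every integer $n>0$, $$(\Lambda_A\ast\beta_k)(n)=A(n)\beta_k(n)-\beta_{k+1}(n).$$
   Context: $A(n)=\sum_{p^\alpha\parallel n}\alpha p$ is the sum of the prime factors of $n$ counted with multiplicity. $\Lambda_A(n)=p$ if $n=p^k$ for some prime $p$ and integer $k\geq1$, and $0$ otherwise. $\beta_k(n)=\sum_{p\mid n}p^k$ (sum over distinct primes dividing $n$). $\ast$ is Dirichlet convolution $(F\ast G)(n)=\sum_{d\mid n}F(d)G(n/d)$. *)

From Stdlib Require Import Reals.
From Coquelicot Require Import Coquelicot.
From mathcomp Require Import ssreflect ssrfun ssrbool eqtype ssrnat seq div prime bigop.

Set Implicit Arguments. Unset Strict Implicit. Unset Printing Implicit Defensive.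

Definition Afun (n : nat) : nat := \sum_(p <- primes n) (logn p n * p)%N.

(* Lambda_A(n) = p if n = p^k (p prime, k >= 1), 0 otherwise. *)
Definition LambdaA (n : nat) : nat :=
  \sum_(p <- primes n | n == (p ^ logn p n)%N) p.

Definition cpow (x : R) (s : C) : C :=
  (exp (Re s * ln x) * cos (Im s * ln x), exp (Re s * ln x) * sin (Im s * ln x))%R.

Definition beta (k : C) (n : nat) : C :=
  \big[Cplus/RtoC 0]_(p <- primes n) cpow (INR p) k.

Definition dconv (F G : nat -> C) (n : nat) : C :=
  \big[Cplus/RtoC 0]_(d <- divisors n) Cmult (F d) (G (n %/ d)).

From HB Require Import structures.
From Stdlib Require Import Reals.
From Coquelicot Require Import Coquelicot.
From mathcomp Require Import ssreflect ssrfun ssrbool eqtype ssrnat seq div prime bigop.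

(* Writing beta_k(n/d) as a sum over the primes q of n with indicator [q | n/d]
   and exchanging sums, the coefficient of q^k is the sum of Lambda_A(d) over
   the divisors d of n with q | n/d.  Summed over all d | n, Lambda_A gives A(n);
   the only prime-power divisor d with q not dividing n/d is the full q-part
   q^(v_q(n)), which contributes q.  Hence the coefficient is A(n) - q, and
   q * q^k = q^(k+1). *)

Set Implicit Arguments.
Unset Strict Implicit.

Local Open Scope nat_scope.

Section ComMonoidBig.
Variables (M : Type) (idx : M) (op : Monoid.com_law idx).

Lemma big_uniq_only1 (I : eqType) (r : seq I) x (F : I -> M) :
  uniq r -> x \in r -> (forall y, y \in r -> y != x -> F y = idx) ->
  \big[op/idx]_(y <- r) F y = F x.
Proof.
move=> r_uniq xr F0; rewrite (big_rem x) //= big1_seq ?Monoid.mulm1 // => y /andP[_].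
by rewrite (mem_rem_uniq x r_uniq) inE => /andP[yx yr]; apply: F0.
Qed.

Lemma big_prime_power_divisors (G : nat -> nat -> M) n : 0 < n ->
  \big[op/idx]_(d <- divisors n) \big[op/idx]_(p <- primes d | d == p ^ logn p d) G p d
  = \big[op/idx]_(p <- primes n) \big[op/idx]_(j <- iota 1 (logn p n)) G p (p ^ j).
Proof.
move=> n_gt0.
rewrite (eq_big_seq (fun d => \big[op/idx]_(p <- primes n |
                              (p \in primes d) && (d == p ^ logn p d)) G p d)); last first.
  move=> d; rewrite -dvdn_divisors // => dn; rewrite -big_filter_cond; apply: perm_big.
  apply: uniq_perm; [exact: primes_uniq | exact/filter_uniq/primes_uniq|].
  move=> p; rewrite mem_filter andb_idr // !mem_primes => /and3P[pp _ pd].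
  by rewrite pp n_gt0 (dvdn_trans pd dn).
under eq_bigr do rewrite big_mkcond.
rewrite exchange_big; apply: eq_big_seq => p; rewrite mem_primes => /andP[pp _] /=.
have p_gt1 := prime_gt1 pp.
rewrite -big_mkcond -big_filter -(big_map (expn p) xpredT (G p)).
apply/perm_big/uniq_perm.
- exact/filter_uniq/divisors_uniq.
- by rewrite (map_inj_uniq (expnI p_gt1)) iota_uniq.
move=> d; rewrite mem_filter -dvdn_divisors //; apply/andP/mapP.
- case=> /andP[pd /eqP def_d] dn; exists (logn p d) => //.
  by rewrite mem_iota add1n ltnS logn_gt0 pd -pfactor_dvdn // -def_d.
- case=> j; rewrite mem_iota add1n ltnS => /andP[j_gt0 j_le] ->.
  rewrite pfactorK // eqxx andbT pfactor_dvdn // j_le; split=> //.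
  by rewrite mem_primes pp expn_gt0 prime_gt0 // dvdn_exp.
Qed.

End ComMonoidBig.

Lemma mem_primes_div_pfactor p j n q : prime p -> 0 < n -> p ^ j %| n ->
  (q \in primes (n %/ p ^ j)) = (q \in primes n) && ((q != p) || (j < logn p n)).
Proof.
move=> pp n_gt0 pjn; have nd_gt0 : 0 < n %/ p ^ j.
  by rewrite divn_gt0 ?expn_gt0 ?prime_gt0 // (dvdn_leq n_gt0 pjn).
rewrite !mem_primes n_gt0 nd_gt0 /=.
have [qp|] := boolP (prime q); last by [].
have [->|qp_neq] := eqVneq q p.
  have dvd_logn m : 0 < m -> (p %| m) = (0 < logn p m).
    by move=> m_gt0; rewrite -(pfactor_dvdn 1 pp m_gt0) expn1.
  rewrite !dvd_logn // logn_div // pfactorK // subn_gt0 /=.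
  by rewrite andb_idl // => /(leq_ltn_trans (leq0n j)).
rewrite /= andbT -[in RHS](divnK pjn) Euclid_dvdM // Euclid_dvdX //.
by rewrite (dvdn_prime2 qp pp) (negbTE qp_neq) orbF.
Qed.

Lemma Afun_sum_LambdaA n : 0 < n -> Afun n = \sum_(d <- divisors n) LambdaA d.
Proof.
move=> n_gt0; rewrite /LambdaA (big_prime_power_divisors _ (fun p _ => p) n_gt0) /Afun.
by apply: eq_bigr => p _; rewrite big_const_seq count_predT size_iota iter_addn_0 mulnC.
Qed.

Lemma sum_LambdaA_notin_primes_div n q : 0 < n -> q \in primes n ->
  \sum_(d <- divisors n) LambdaA d * (q \notin primes (n %/ d)) = q.
Proof.
move=> n_gt0 qn; have qp : prime q by move: qn; rewrite mem_primes => /andP[].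
under eq_bigr do rewrite /LambdaA big_distrl /=.
rewrite (big_prime_power_divisors _ (fun p d => p * (q \notin primes (n %/ d))) n_gt0).
have indicator p j : p \in primes n -> 0 < j <= logn p n ->
    q \notin primes (n %/ p ^ j) = (p == q) && (j == logn p n).
  rewrite mem_primes => /andP[pp _] /andP[_ j_le].
  rewrite mem_primes_div_pfactor ?pfactor_dvdn // qn negb_or negbK.
  by rewrite -leqNgt [j == _]eqn_leq j_le (eq_sym q).
rewrite (big_uniq_only1 _ (x := q)) ?primes_uniq //; last first.
  move=> p pn pq; apply: big1_seq => j /andP[_]; rewrite mem_iota add1n ltnS => j_range.
  by rewrite indicator // (negbTE pq) muln0.
have logq_gt0 : 0 < logn q n by rewrite logn_gt0.
rewrite (big_uniq_only1 _ (x := logn q n)) ?iota_uniq //.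
- by rewrite indicator ?eqxx ?muln1 // logq_gt0 /=.
- by rewrite mem_iota add1n ltnS leqnn logq_gt0.
move=> j; rewrite mem_iota add1n ltnS => j_range j_neq.
by rewrite indicator // (negbTE j_neq) andbF muln0.
Qed.

Lemma sum_LambdaA_in_primes_div n q : 0 < n -> q \in primes n ->
  \sum_(d <- divisors n) LambdaA d * (q \in primes (n %/ d)) + q = Afun n.
Proof.
move=> n_gt0 qn; rewrite -{2}(sum_LambdaA_notin_primes_div n_gt0 qn) -big_split /=.
rewrite (Afun_sum_LambdaA n_gt0); apply: eq_bigr => d _.
by rewrite -mulnDr; case: (_ \in _); rewrite muln1.
Qed.

HB.instance Definition _ := Monoid.isComLaw.Build C (RtoC 0) Cplus
  Cplus_assoc Cplus_comm Cplus_0_l.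
HB.instance Definition _ := Monoid.isMulLaw.Build C (RtoC 0) Cmult Cmult_0_l Cmult_0_r.
HB.instance Definition _ := Monoid.isAddLaw.Build C Cmult Cplus
  Cmult_plus_distr_r Cmult_plus_distr_l.

Local Notation Cnat n := (RtoC (INR n)).

Lemma Cnat_add m n : Cnat (m + n) = Cplus (Cnat m) (Cnat n).
Proof. by rewrite plus_INR RtoC_plus. Qed.

Lemma Cnat_mul m n : Cnat (m * n) = Cmult (Cnat m) (Cnat n).
Proof. by rewrite mult_INR RtoC_mult. Qed.

Lemma Cnat_sum (I : Type) (r : seq I) (F : I -> nat) :
  Cnat (\sum_(i <- r) F i) = \big[Cplus/RtoC 0]_(i <- r) Cnat (F i).
Proof. exact: (big_morph (fun m => Cnat m) Cnat_add). Qed.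

Lemma Cmult_Cnat_bool (b : bool) (z : C) :
  Cmult (Cnat b) z = if b then z else RtoC 0.
Proof. by case: b; [exact: Cmult_1_l | exact: Cmult_0_l]. Qed.

Lemma big_primes_div (w : nat -> C) n d : 0 < n -> d %| n ->
  \big[Cplus/RtoC 0]_(p <- primes (n %/ d)) w p
  = \big[Cplus/RtoC 0]_(q <- primes n) Cmult (Cnat (q \in primes (n %/ d))) (w q).
Proof.
move=> n_gt0 dn.
under [RHS]eq_bigr do rewrite Cmult_Cnat_bool.
rewrite -big_mkcond -[RHS]big_filter; apply: perm_big; apply: uniq_perm.
- exact: primes_uniq.
- exact/filter_uniq/primes_uniq.
move=> q; rewrite mem_filter andb_idr // !mem_primes => /and3P[qp _ qnd].
by rewrite qp n_gt0 (dvdn_trans qnd (dvdn_div dn)).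
Qed.

Lemma sum_LambdaA_primes_div (w : nat -> C) n : 0 < n ->
  \big[Cplus/RtoC 0]_(d <- divisors n)
     Cmult (Cnat (LambdaA d)) (\big[Cplus/RtoC 0]_(p <- primes (n %/ d)) w p)
  = \big[Cplus/RtoC 0]_(q <- primes n) Cmult (Cminus (Cnat (Afun n)) (Cnat q)) (w q).
Proof.
move=> n_gt0.
have dvd_of_divisors d : d \in divisors n -> d %| n by rewrite dvdn_divisors.
under eq_big_seq => d /dvd_of_divisors dn do rewrite (big_primes_div _ n_gt0 dn) big_distrr.
rewrite exchange_big /=; apply: eq_big_seq => q qn.
rewrite -(sum_LambdaA_in_primes_div n_gt0 qn) Cnat_add Cnat_sum.
rewrite /Cminus -Cplus_assoc Cplus_opp_r Cplus_0_r big_distrl /=.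
by apply: eq_bigr => d _; rewrite Cnat_mul Cmult_assoc.
Qed.

Lemma cpow_add1 (x : R) (k : C) : (0 < x)%R ->
  cpow x (Cplus k (RtoC 1)) = Cmult (RtoC x) (cpow x k).
Proof.
move=> x_gt0; rewrite /cpow /Re /Im /=.
rewrite Rmult_plus_distr_r Rmult_1_l exp_plus exp_ln // Rplus_0_r.
by apply: injective_projections => /=; ring.
Qed.

Lemma beta_add1 (k : C) n :
  beta (Cplus k (RtoC 1)) n
  = \big[Cplus/RtoC 0]_(q <- primes n) Cmult (Cnat q) (cpow (INR q) k).
Proof.
apply: eq_big_seq => q; rewrite mem_primes => /andP[qp _].
by apply/cpow_add1/lt_0_INR/ltP/prime_gt0.
Qed.

Theorem theorem3p4 (k : C) (n : nat) :
  (0 < n)%N ->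
  dconv (fun m => RtoC (INR (LambdaA m))) (beta k) n =
  Cminus (Cmult (RtoC (INR (Afun n))) (beta k n)) (beta (Cplus k (RtoC 1)) n).
Proof.
move=> n_gt0; rewrite /dconv sum_LambdaA_primes_div // beta_add1 /beta big_distrr.
rewrite /Cminus (big_morph Copp Copp_plus_distr Copp_0) -big_split /=.
by apply: eq_bigr => q _; ring.
Qed.
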